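(* Let $f_1,\dots,f_N$, $\Phi$, $c$, $\sigma$, $x_k$ and $d_k$ be as in Algorithm X described in the context. Then at every iteration $k$ the backtracking loop terminates after finitely many steps; that is, if $d_k\ne0$ there exists a nonnegative integer $j$ such that $\Phi(x_k+\sigma^jd_k)<\Phi(x_k)+c\sigma^j\Phi'(x_k;d_k)$ (and if $d_k=0$ the loop terminates immediately).
   Context: Standing assumptions: $f_1,\dots,f_N:\mathbb{R}^n\to\mathbb{R}$; (H1) there is $M\in\mathbb{R}$ with $f_j(x)\ge M$ for all $x$ and $j$; (H2) each $f_j\in C^1(\mathbb{R}^n)$ and there is a modulus of continuity $w$ (increasing $w:[0,\infty)\to[0,\infty)$, $w(0)=0$, continuous at $0$) with $\|\nabla f_j(x)-\nabla f_j(y)\|\le w(\|x-y\|)$ for all $x,y$ and $j$. Let $\Phi(x)=\max_{1\le j\le N}f_j(x)$, and $g'(x;d)=\lim_{t\to0^+}\frac{g(x+td)-g(x)}{t}$ denotes the directional derivative. Algorithm X: set $x_0=0$, $c=\sigma=\tfrac12$. At iteration $k$: let $G\in\mathbb{R}^{N\times n}$ have $j$-th row $\nabla f_j(x_k)^T$, $f=(f_1(x_k),\dots,f_N(x_k))^T$; let $\lambda$ be a solution of $\min_\lambda(\tfrac12\lambda^TGG^T\lambda-f^T\lambda)$ subject to $\sum_i\lambda_i=1$, $\lambda_i\ge0$; set $p_k=-G^T\lambda$, and $d_k=0$ if $p_k=0$, otherwise $d_k=p_k/\|p_k\|$. Backtracking loop: for $j=0,1,2,\dots$, with $\alpha=\sigma^j$: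 stop if $d_k=0$, or if $\Phi(x_k+\alpha d_k)<\Phi(x_k)+c\alpha\Phi'(x_k;d_k)$; otherwise increase $j$. With the final $\alpha$ set $\alpha_k=\alpha$, $x_{k+1}=x_k+\alpha_kd_k$, and repeat. *)

From HB Require Import structures.
From mathcomp Require Import all_boot all_order all_algebra.
From mathcomp Require Import all_classical all_reals all_analysis.
Set Implicit Arguments. Unset Strict Implicit. Unset Printing Implicit Defensive.
Import Order.TTheory GRing.Theory Num.Theory.
Import numFieldNormedType.Exports.
Local Open Scope ring_scope.
Local Open Scope classical_set_scope.

Section AlgorithmX.
Variables (R : realType) (n N : nat).
(* the N+1 functions f_1..f_{N+1} are indexed by 'I_N.+1 (so there is at least one) *)
Variable f : 'I_N.+1 -> 'cV[R]_n -> R.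

Definition enorm (v : 'cV[R]_n) : R := Num.sqrt (\sum_(i < n) v i 0 ^+ 2).

Definition grad (g : 'cV[R]_n -> R) (x : 'cV[R]_n) : 'cV[R]_n :=
  \col_i ('D_(delta_mx i 0) g x).

Definition Phi (x : 'cV[R]_n) : R := \big[Num.max/f ord0 x]_(j < N.+1) f j x.

Definition dirder (g : 'cV[R]_n -> R) (x d : 'cV[R]_n) : R :=
  lim ((fun t : R => (g (x + t *: d) - g x) / t) @ 0^'+).

Definition Gmat (x : 'cV[R]_n) : 'M[R]_(N.+1, n) := \matrix_(j, i) grad (f j) x i 0.
Definition fvec (x : 'cV[R]_n) : 'cV[R]_(N.+1) := \col_j f j x.

Definition qp_obj (x : 'cV[R]_n) (l : 'cV[R]_(N.+1)) : R :=
  2^-1 * (l^T *m Gmat x *m (Gmat x)^T *m l) 0 0 - ((fvec x)^T *m l) 0 0.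

Definition simplex (l : 'cV[R]_(N.+1)) : Prop :=
  \sum_(i < N.+1) l i 0 = 1 /\ forall i, 0 <= l i 0.

Definition qp_solution (x : 'cV[R]_n) (l : 'cV[R]_(N.+1)) : Prop :=
  simplex l /\ forall mu, simplex mu -> qp_obj x l <= qp_obj x mu.

Definition pdir (x : 'cV[R]_n) (l : 'cV[R]_(N.+1)) : 'cV[R]_n := - ((Gmat x)^T *m l).

Definition ddir (x : 'cV[R]_n) (l : 'cV[R]_(N.+1)) : 'cV[R]_n :=
  if pdir x l == 0 then 0 else (enorm (pdir x l))^-1 *: pdir x l.

Definition c_param : R := 2^-1.
Definition sigma_param : R := 2^-1.

Definition armijo (x d : 'cV[R]_n) (j : nat) : Prop :=
  Phi (x + sigma_param ^+ j *: d) < Phi x + c_param * sigma_param ^+ j * dirder Phi x d.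

(* iterate k x : x is a possible k-th iterate x_k of Algorithm X
   (for some choice of QP solutions at the previous iterations);
   the step uses the least j at which the loop stops. *)
Inductive iterate : nat -> 'cV[R]_n -> Prop :=
| iterate0 : iterate 0 0
| iterateS k x l j :
    iterate k x -> qp_solution x l ->
    (ddir x l = 0 -> j = 0%N) ->
    (ddir x l != 0 -> armijo x (ddir x l) j /\ forall i, (i < j)%N -> ~ armijo x (ddir x l) i) ->
    iterate k.+1 (x + sigma_param ^+ j *: ddir x l).

End AlgorithmX.

From HB Require Import structures.
From mathcomp Require Import all_boot all_order all_algebra.
From mathcomp Require Import all_classical all_reals all_analysis.
From mathcomp Require Import ring lra.
Import Order.TTheory GRing.Theory Num.Theory.
Import numFieldNormedType.Exports.
Local Open Scope ring_scope.
Local Open Scope classical_set_scope.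

(* Testing the optimality of the QP solution [l] against the vertex [e_j] of the
   simplex, for an active index [j] (f_j(x) = Phi(x)), gives
   [grad f_j(x) . p <= - |p|^2] with [p = - G^T l]; so [d = p / |p|] is a strict
   descent direction of every active [f_j].  Near [t = 0+] only active indices
   realise the max along [x + t d] (by continuity), so the difference quotients of
   [Phi] converge to the max of [grad f_j(x) . d] over active [j] (Danskin), which
   is negative.  As [c < 1], the quotients along [t = sigma^m -> 0] eventually drop
   below [c Phi'(x; d)]. *)

Section FiniteMax.
Context {R : realType}.

Lemma bigmax_attained {I : Type} (r : seq I) (P : pred I) (F : I -> R) (i0 : I) :
  exists a, \big[Num.max/F i0]_(i <- r | P i) F i = F a.
Proof.
elim/big_ind: _ => [|u v [a ->] [b ->]|a _]; try by eexists.
by rewrite maxEle; case: ifP => _; eexists.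
Qed.

Lemma max_homo (h : R -> R) : {homo h : u v / u <= v} ->
  {morph h : u v / Num.max u v}.
Proof.
move=> h_homo u v; case: (leP u v) => [uv|/ltW vu].
  by rewrite !max_r ?h_homo.
by rewrite !max_l ?h_homo.
Qed.

Lemma bigmax_homo (h : R -> R) : {homo h : u v / u <= v} ->
  forall (I : Type) (r : seq I) (P : pred I) (F : I -> R) x,
  h (\big[Num.max/x]_(i <- r | P i) F i) = \big[Num.max/h x]_(i <- r | P i) h (F i).
Proof.
by move=> h_homo I r P F x; rewrite (big_morph h (max_homo h h_homo) (erefl (h x))).
Qed.

Lemma cvg_bigmax (T : Type) (F : set_system T) {FF : Filter F} (I : Type)
    (r : seq I) (P : pred I) (h : I -> T -> R) (h0 : T -> R) (l : I -> R) (l0 : R) :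
  h0 @ F --> l0 -> (forall i, P i -> h i @ F --> l i) ->
  (fun t => \big[Num.max/h0 t]_(i <- r | P i) h i t) @ F -->
    \big[Num.max/l0]_(i <- r | P i) l i.
Proof.
move=> h0l0 hl; elim: r => [|i r IH].
  by rewrite big_nil; under eq_fun do rewrite big_nil.
rewrite big_cons; under eq_fun do rewrite big_cons.
case: (boolP (P i)) => // Pi.
apply: (@continuous2_cvg _ R R R _ _ _ _ (fun u v => Num.max u v)) => //; last exact: hl.
exact: (@max_continuous _ R (l i, _)).
Qed.

End FiniteMax.

Section Danskin.
Context {R : realType} {I : finType} (i0 : I) {g : I -> R -> R} {y D : I -> R}.
Hypothesis g_cvg : forall j, g j @ 0^'+ --> y j.
Hypothesis g_dq : forall j, (fun t => (g j t - y j) / t) @ 0^'+ --> D j.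

Let ymax := \big[Num.max/y i0]_j y j.
Let active j := y j == ymax.

Lemma bigmax_near_active a : y a = ymax ->
  \forall t \near 0^'+,
    \big[Num.max/g i0 t]_j g j t = \big[Num.max/g a t]_(j | active j) g j t.
Proof.
move=> ya.
have inactive_below : \forall t \near 0^'+, forall j, ~~ active j -> g j t < g a t.
  apply: filter_forall => j; case: (boolP (active j)) => [_|yj]; first exact: nearW.
  have gap : 0 < y a - y j.
    by rewrite subr_gt0 ya lt_neqAle yj le_bigmax.
  near=> t => _; rewrite -subr_gt0; near: t.
  exact: (cvgr_gt _ (cvgB (g_cvg a) (g_cvg j))).
near=> t; have below : forall j, ~~ active j -> g j t < g a t by near: t.
have le_active j : g j t <= \big[Num.max/g a t]_(i | active i) g i t.
  case: (boolP (active j)) => [aj|/below/ltW gj]; first exact: le_bigmax_cond.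
  by rewrite (le_trans gj) ?bigmax_ge_id.
apply/le_anti/andP; split; first exact: bigmax_le.
by apply: bigmax_le => [|j _]; exact: le_bigmax.
Unshelve. all: by end_near.
Qed.

Lemma dq_bigmax_cvg a : y a = ymax ->
  (fun t => (\big[Num.max/g i0 t]_j g j t - ymax) / t) @ 0^'+ -->
    \big[Num.max/D a]_(j | active j) D j.
Proof.
move=> ya.
apply: cvg_trans (@cvg_bigmax _ _ _ _ _ _ active
  (fun j t => (g j t - y j) / t) _ _ _ (g_dq a) (fun j _ => g_dq j)).
apply: near_eq_cvg; near=> t.
have t_gt0 : 0 < t by near: t; exact: nbhs_right_gt.
have h_homo : {homo (fun v => (v - ymax) / t) : u v / u <= v}.
  by move=> u v uv; rewrite ler_pM2r ?invr_gt0 // lerD2r.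
rewrite (near (bigmax_near_active a ya) t) // (bigmax_homo _ h_homo) ya.
by apply: eq_bigr => j /eqP ->.
Unshelve. all: by end_near.
Qed.

End Danskin.

Section AlongRay.
Context {R : realType} {V : normedModType R}.
Implicit Types (g : V -> R) (x d : V).

Lemma cvg_along_ray {g x} d : {for x, continuous g} -> g (x + t *: d) @[t --> 0^'+] --> g x.
Proof.
move=> g_cont; apply: cvg_at_right_filter.
have ray_cvg : x + t *: d @[t --> 0] --> x.
  rewrite -[X in _ --> X]addr0; apply: cvgD; first exact: cvg_cst.
  by rewrite -(scale0r d); apply: cvgZr_tmp; exact: cvg_id.
exact: cvg_comp ray_cvg g_cont.
Qed.

Lemma dq_cvg_derive {g x} d : differentiable g x ->
  (g (x + t *: d) - g x) / t @[t --> 0^'+] --> 'D_d g x.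
Proof.
move=> g_diff.
have dq_cvg : h^-1 *: ((g \o shift x) (h *: d) - g x) @[h --> 0^'] --> 'D_d g x.
  exact: diff_derivable.
apply: cvg_trans (cvg_dnbhs_at_right dq_cvg); apply: near_eq_cvg; near=> t.
by rewrite /= [t *: d + x]addrC mulrC.
Unshelve. all: by end_near.
Qed.

End AlongRay.

Lemma backtracking_terminates (R : realType) (phi : R -> R) (phi0 L c s : R) :
  (fun t => (phi t - phi0) / t) @ 0^'+ --> L -> L < 0 -> c < 1 -> 0 < s < 1 ->
  exists m, phi (s ^+ m) < phi0 + c * s ^+ m * L.
Proof.
move=> dq L_lt0 c_lt1 /andP[s_gt0 s_lt1].
have pow_gt0 m : 0 < s ^+ m by exact: exprn_gt0.
have pow_cvg : s ^+ m @[m --> \oo] --> 0 by apply: cvg_expr; rewrite ger0_norm ?ltW.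
have /cvgr_lt/(_ (c * L)) dq_pow := (cvg_at_rightP _ _ _).1 dq _ (conj pow_gt0 pow_cvg).
have [|m] := filter_ex (dq_pow _); first nra.
by rewrite /= ltr_pdivrMr // => ?; exists m; lra.
Qed.

Lemma ge0_first_order_coef (R : realFieldType) (a b : R) :
  (forall s, 0 < s -> s <= 1 -> 0 <= s * a + s ^+ 2 * b) -> 0 <= a.
Proof.
move=> small_s; rewrite leNgt; apply/negP => a_lt0.
have den_gt0 : 0 < `|b| - a by have := normr_ge0 b; lra.
pose s := - a / (`|b| - a).
have s_gt0 : 0 < s by rewrite divr_gt0 // oppr_gt0.
have s_le1 : s <= 1 by rewrite ler_pdivrMr // mul1r; have := normr_ge0 b; lra.
have sE : s * (`|b| - a) = - a by rewrite mulfVK // gt_eqF.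
have sb : s ^+ 2 * b <= s ^+ 2 * `|b| by rewrite ler_wpM2l ?sqr_ge0 // ler_norm.
have : s * a + s ^+ 2 * `|b| = s * (s * a).
  by rewrite expr2 -mulrA -mulrDr; congr (_ * _); rewrite mulrBr in sE; lra.
have : s * (s * a) < 0 by rewrite pmulr_rlt0 // pmulr_rlt0.
have := small_s s s_gt0 s_le1; lra.
Qed.

Section QuadraticObjective.
Context {R : realFieldType} {m : nat} (M : 'M[R]_m) (a : 'cV[R]_m).

Definition quad_obj (v : 'cV[R]_m) : R := 2^-1 * (v^T *m M *m v) 0 0 - (a^T *m v) 0 0.

Hypothesis M_sym : M^T = M.

Lemma quad_form_sym (u v : 'cV[R]_m) : (v^T *m M *m u) 0 0 = (u^T *m M *m v) 0 0.
Proof.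
transitivity ((v^T *m M *m u)^T 0 0); first by rewrite [RHS]mxE.
by rewrite !trmx_mul trmxK M_sym mulmxA.
Qed.

Lemma quad_objDZ (l d : 'cV[R]_m) (s : R) : quad_obj (l + s *: d) =
  quad_obj l + s * ((l^T *m M *m d) 0 0 - (a^T *m d) 0 0)
  + s ^+ 2 * (2^-1 * (d^T *m M *m d) 0 0).
Proof.
rewrite /quad_obj.
have -> : (l + s *: d)^T = l^T + s *: d^T by apply/matrixP => i j; rewrite !mxE.
rewrite !mulmxDl !mulmxDr -!scalemxAr -!scalemxAl !scalerA.
have := quad_form_sym l d.
move: (l^T *m M *m l) (l^T *m M *m d) (d^T *m M *m l) (d^T *m M *m d)
  (a^T *m l) (a^T *m d) => X Y Y' Z A B sym.
by rewrite !mxE sym; field.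
Qed.

Lemma quad_obj_min_first_order (l d : 'cV[R]_m) :
  (forall s, 0 < s -> s <= 1 -> quad_obj l <= quad_obj (l + s *: d)) ->
  0 <= (l^T *m M *m d) 0 0 - (a^T *m d) 0 0.
Proof.
move=> l_min; apply: (@ge0_first_order_coef _ _ (2^-1 * (d^T *m M *m d) 0 0)).
by move=> s s_gt0 s_le1; have := l_min s s_gt0 s_le1; rewrite quad_objDZ; lra.
Qed.

End QuadraticObjective.

Section Simplex.
Context {R : realType} {N : nat}.
Implicit Types (l mu v : 'cV[R]_N.+1).

Lemma simplex_segment l mu s : simplex l -> simplex mu -> 0 <= s <= 1 ->
  simplex (l + s *: (mu - l)).
Proof.
move=> [l_sum l_ge0] [mu_sum mu_ge0] /andP[s_ge0 s_le1]; split.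
  under eq_bigr do rewrite !mxE.
  rewrite big_split /= -mulr_sumr sumrB l_sum mu_sum; ring.
move=> i; have := l_ge0 i; have := mu_ge0 i; rewrite !mxE => mu_i l_i.
have -> : l i 0 + s * (mu i 0 - l i 0) = (1 - s) * l i 0 + s * mu i 0 by ring.
by rewrite addr_ge0 ?mulr_ge0 ?subr_ge0.
Qed.

Lemma simplex_delta (j : 'I_N.+1) : simplex (delta_mx j 0 : 'cV[R]_N.+1).
Proof.
split=> [|i]; last by rewrite mxE ler0n.
rewrite (bigD1 j) //= big1 => [|i ij]; first by rewrite mxE !eqxx addr0.
by rewrite mxE (negbTE ij).
Qed.

Lemma simplex_dot_le l v b : simplex l -> (forall i, v i 0 <= b) ->
  (v^T *m l) 0 0 <= b.
Proof.
move=> [l_sum l_ge0] v_le; rewrite mxE -[leRHS]mulr1 -l_sum mulr_sumr.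
by apply: ler_sum => i _; rewrite mxE ler_wpM2r.
Qed.

End Simplex.

Section Gradients.
Context {R : realType} {n : nat}.
Implicit Types (g : 'cV[R]_n -> R) (x v : 'cV[R]_n).

Lemma derive_grad g x v : differentiable g x ->
  'D_v g x = \sum_(i < n) grad g x i 0 * v i 0.
Proof.
move=> g_diff; rewrite deriveE // {1}[v]matrix_sum_delta linear_sum.
apply: eq_bigr => i _; rewrite big_ord1 linearZ /= -deriveE // mxE.
by rewrite mulrC.
Qed.

Lemma sumsq_gt0 {v} : v != 0 -> 0 < \sum_(i < n) v i 0 ^+ 2.
Proof.
move=> v_neq0; have [i vi_neq0] : exists i, v i 0 != 0.
  apply/existsP; apply: contraNT v_neq0 => /existsPn v0.
  by apply/eqP/matrixP => i j; rewrite (ord1 j) mxE; exact/eqP/negbNE/v0.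
rewrite (bigD1 i) //= ltr_pwDl ?sumr_ge0 // => [|j _]; last exact: sqr_ge0.
by rewrite lt_neqAle sqr_ge0 andbT eq_sym sqrf_eq0.
Qed.

Lemma enorm_gt0 {v} : v != 0 -> 0 < enorm v.
Proof. by move=> v_neq0; rewrite sqrtr_gt0 sumsq_gt0. Qed.

End Gradients.

Section SearchDirection.
Context {R : realType} {n N : nat} (f : 'I_N.+1 -> 'cV[R]_n -> R) (x : 'cV[R]_n).
Let G := Gmat f x.

Lemma qp_objE l : qp_obj f x l = quad_obj (G *m G^T) (fvec f x) l.
Proof. by rewrite /qp_obj /quad_obj !mulmxA. Qed.

Lemma fvec_dot_simplex_le {l} : simplex l -> ((fvec f x)^T *m l) 0 0 <= Phi f x.
Proof. by move=> l_simplex; apply: simplex_dot_le => // i; rewrite mxE le_bigmax. Qed.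

Lemma qp_solution_active {l j} : qp_solution f x l -> f j x = Phi f x ->
  ((G^T *m l)^T *m (G^T *m l)) 0 0 <= (G *m (G^T *m l)) j 0.
Proof.
move=> [l_simplex l_min] fj_max; set e : 'cV[R]_N.+1 := delta_mx j 0.
have M_sym : (G *m G^T)^T = G *m G^T by rewrite trmx_mul trmxK.
have segment_min s : 0 < s -> s <= 1 ->
    quad_obj (G *m G^T) (fvec f x) l <= quad_obj (G *m G^T) (fvec f x) (l + s *: (e - l)).
  move=> s_gt0 s_le1; rewrite -!qp_objE; apply: l_min.
  by apply: simplex_segment => //; [exact: simplex_delta | rewrite ltW].
have := quad_obj_min_first_order _ (fvec f x) M_sym _ _ segment_min.
have MlE : (l^T *m (G *m G^T) *m e) 0 0 = (G *m (G^T *m l)) j 0.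
  by rewrite (quad_form_sym _ M_sym) trmx_delta -mulmxA -rowE mxE !mulmxA.
have llE : (l^T *m (G *m G^T) *m l) 0 0 = ((G^T *m l)^T *m (G^T *m l)) 0 0.
  by rewrite trmx_mul trmxK !mulmxA.
have feE : ((fvec f x)^T *m e) 0 0 = f j x by rewrite -colE !mxE.
have := fvec_dot_simplex_le l_simplex.
have entryB (A B : 'M[R]_1) : (A - B) 0 0 = A 0 0 - B 0 0 by rewrite !mxE.
rewrite !mulmxBr !entryB MlE llE feE fj_max; lra.
Qed.

Lemma Gmat_mulE v j : differentiable (f j) x -> (Gmat f x *m v) j 0 = 'D_v (f j) x.
Proof.
by move=> fj_diff; rewrite derive_grad // mxE; apply: eq_bigr => i _; rewrite mxE.
Qed.

Lemma derive_ddir_lt0 l j : differentiable (f j) x -> qp_solution f x l ->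
  f j x = Phi f x -> pdir f x l != 0 -> 'D_(ddir f x l) (f j) x < 0.
Proof.
move=> fj_diff l_qp fj_max p_neq0.
set u := (Gmat f x)^T *m l.
have pE : pdir f x l = - u by [].
have u_neq0 : u != 0 by apply: contraNneq p_neq0 => u0; rewrite pE u0 oppr0.
have uu_gt0 : 0 < (u^T *m u) 0 0.
  rewrite mxE; under eq_bigr do rewrite mxE -expr2.
  exact: sumsq_gt0.
have := qp_solution_active l_qp fj_max; rewrite -/u => active.
have p_gt0 := enorm_gt0 p_neq0.
rewrite /ddir (negbTE p_neq0) -Gmat_mulE // -scalemxAr pE mulmxN.
have -> : ((enorm (- u))^-1 *: - (Gmat f x *m u)) j 0
    = - ((enorm (- u))^-1 * (Gmat f x *m u) j 0) by rewrite !mxE mulrN.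
rewrite oppr_lt0 mulr_gt0 ?invr_gt0 -?pE //; lra.
Qed.

End SearchDirection.

Theorem theorem4 (R : realType) (n N : nat) (f : 'I_N.+1 -> 'cV[R]_n -> R) (M : R) :
  (* (H1) *)
  (forall j x, M <= f j x) ->
  (* each f_j is C^1 *)
  (forall j, (forall x, differentiable (f j) x) /\ continuous (grad (f j))) ->
  (* (H2) *)
  (exists w : R -> R,
      (forall a b, 0 <= a -> a <= b -> w a <= w b) /\
      (forall t, 0 <= t -> 0 <= w t) /\
      w 0 = 0 /\ (w @ 0^'+ --> 0) /\
      (forall j x y, enorm (grad (f j) x - grad (f j) y) <= w (enorm (x - y)))) ->
  forall (k : nat) (x : 'cV[R]_n) (l : 'cV[R]_(N.+1)),
    iterate f k x -> qp_solution f x l ->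
    ddir f x l != 0 ->
    exists j : nat, armijo f x (ddir f x l) j.
Proof.
move=> _ f_C1 _ _ x l _ l_qp d_neq0.
have f_diff j : differentiable (f j) x by case: (f_C1 j).
have p_neq0 : pdir f x l != 0.
  by apply: contraNneq d_neq0; rewrite /ddir => ->; rewrite eqxx.
set d := ddir f x l.
have [a fa_max] := bigmax_attained (index_enum 'I_N.+1) xpredT (f^~ x) ord0.
set L := \big[Num.max/'D_d (f a) x]_(j | f j x == Phi f x) 'D_d (f j) x.
have dq_Phi : (Phi f (x + t *: d) - Phi f x) / t @[t --> 0^'+] --> L.
  apply: (dq_bigmax_cvg ord0 _ _ a (esym fa_max)) => j.
    exact/cvg_along_ray/differentiable_continuous.
  exact: dq_cvg_derive.
have L_lt0 : L < 0.
  by apply: bigmax_lt => [|j /eqP fj_max]; apply: derive_ddir_lt0.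
have dirder_Phi : dirder (Phi f) x d = L by exact: cvg_lim dq_Phi.
rewrite /armijo dirder_Phi.
apply: backtracking_terminates dq_Phi L_lt0 _ _; rewrite /c_param /sigma_param.
  by rewrite invf_lt1 // ltr1n.
by rewrite invr_gt0 invf_lt1 ?ltr0n ?ltr1n.
Qed.
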